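(* For every $d$ with $0\le d\le\rho(m)-1$, the sequence $(w(n,d))_{n\ge0}$ has transient length $\rho(m)\,(k-p_d-1)+d+1$ and cycle length $L_0(d)$.
   Context: For $u\in\mathbb{R}$ let $\mathbf 1[u]=1$ if $u\ge 0$ and $\mathbf 1[u]=0$ if $u<0$. For a $\{0,1\}$-valued sequence $(s(n))_{n\ge0}$ that is eventually periodic, its transient length is the least $T\ge0$ such that there is $P\ge1$ with $s(n+P)=s(n)$ for all $n\ge T$, and its cycle length is the least such $P$ (for that $T$). Let $m$ be a positive integer and let $\rho(m)$ denote the number of primes $p$ with $2m<p<3m$; assume $\rho(m)\ge 2$. List these primes as $p_0>p_1>\dots>p_{\rho(m)-1}$ and put $\alpha_i=3m-p_i$. Let $k=(6m-1)\rho(m)$, $\mu_i=\lfloor k/p_i\rfloor$, $\beta_i=k-p_i\mu_i$. Define weights $\bar a_j$, $1\le j\le k$: if $\rho(m)$ is even, $\bar a_j=2$ if $j=\ell p_i$ for some $i$ and some $\ell$ with $1\le \ell\le 3\rho(m)/2$, $\bar a_j=-2$ if $j=\ell p_i$ with $3\rho(m)/2<\ell\le 2\rho(m)$, and $\bar a_j=0$ otherwise; if $\rho(m)$ is odd, $\bar a_j=2$ if $j=\ell p_i$ with $1\le\ell\le (3\rho(m)-1)/2$, $\bar a_j=-2$ if $j=\ell p_i$ with $(3\rho(m)+1)/2\le \ell\le 2\rho(m)-2$, $\bar a_j=-1$ if $j=\ell p_i$ with $\ell\in\{2\rho(m)-1,2\rho(m)\}$, and $\bar a_j=0$ otherwise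 (well defined since the sets $\{\ell p_i:1\le\ell\le2\rho(m)\}$ are pairwise disjoint). Let $\bar\theta=2\rho(m)$. For each $i$ define $x^{\alpha_i}(t)$ for $0\le t\le k-1$ by $x^{\alpha_i}(t)=1$ if $t=\beta_i+\ell p_i$ for some $0\le \ell\le\mu_i-1$ and $x^{\alpha_i}(t)=0$ otherwise, and for $t\ge k$ by $x^{\alpha_i}(t)=\mathbf 1\big[\sum_{j=1}^k \bar a_j x^{\alpha_i}(t-j)-\bar\theta\big]$. Let $h=\rho(m)k$. For $1\le f\le h$ let $b_f=\bar a_j$ if $f=\rho(m)j$ with $1\le j\le k$, and $b_f=0$ otherwise. Define $(y(n))_{n\ge0}$ by $y(\rho(m)j+i)=x^{\alpha_i}(1+j)$ for $0\le j\le k-1$, $0\le i\le\rho(m)-1$, and $y(n)=\mathbf 1\big[\sum_{f=1}^h b_f y(n-f)-\bar\theta\big]$ for $n\ge h$. Let $L_1(d)=\rho(m)\cdot\mathrm{lcm}(p_0,\dots,p_d)$ for $0\le d\le\rho(m)-1$; let $L_0(d)=\rho(m)\cdot\mathrm{lcm}(p_{d+1},\dots,p_{\rho(m)-1})$ if $0\le d\le\rho(m)-2$ and $L_0(\rho(m)-1)=1$. For $0\le d\le\rho(m)-1$ define $(w(n,d))_{n\ge0}$ by: for $0\le i\le d$, $w(\rho(m)j+i,d)=x^{\alpha_i}(1+j)$ for $0\le j\le k-2$ and $w(\rho(m)(k-1)+i,d)=1-x^{\alpha_i}(k)$; for $d+1\le i\le\rho(m)-1$ and $0\le j\le k-1$,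 $w(\rho(m)j+i,d)=y(\rho(m)j+i+L_1(d))$; and $w(n,d)=\mathbf 1\big[\sum_{f=1}^h b_f w(n-f,d)-\bar\theta\big]$ for $n\ge h$. *)

From HB Require Import structures.
From mathcomp Require Import all_boot all_order all_algebra.
Set Implicit Arguments. Unset Strict Implicit. Unset Printing Implicit Defensive.
Import GRing.Theory Num.Theory.

(* s n = init n for n < h, and for n >= h
   s n = 1[ sum_{f=1}^h b f * s (n - f) - theta ] = (sum ... >= theta). *)
Definition lts_next (h : nat) (b : nat -> int) (theta : int)
  (init : nat -> bool) (n : nat) (hist : seq bool) : bool :=
  if n < h then init n
  else (theta <= \sum_(1 <= f < h.+1) b f * (Posz (nth false hist (n - f) : nat)))%R.

Fixpoint lts_hist (h : nat) (b : nat -> int) (theta : int)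
  (init : nat -> bool) (n : nat) : seq bool :=
  match n with
  | 0 => [::]
  | n'.+1 => let l := lts_hist h b theta init n' in
             rcons l (lts_next h b theta init n' l)
  end.

(* the n-th term of the recurrence (hist (n+1) lists s 0, ..., s n) *)
Definition lts (h : nat) (b : nat -> int) (theta : int)
  (init : nat -> bool) (n : nat) : bool :=
  nth false (lts_hist h b theta init n.+1) n.

Definition periodic_from (s : nat -> bool) (T P : nat) : Prop :=
  forall n, T <= n -> s (n + P) = s n.

Definition transient_length (s : nat -> bool) (T : nat) : Prop :=
  (exists P, 0 < P /\ periodic_from s T P) /\
  (forall T', (exists P, 0 < P /\ periodic_from s T' P) -> T <= T').

Definition cycle_length (s : nat -> bool) (T P : nat) : Prop :=
  0 < P /\ periodic_from s T P /\
  (forall P', 0 < P' -> periodic_from s T P' -> P <= P').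

(* primes p with 2m < p < 3m, in decreasing order: p_0 > p_1 > ... *)
Definition primes_list (m : nat) : seq nat :=
  [seq p <- rev (iota (2 * m).+1 (m.-1)) | prime p].

Definition rho (m : nat) : nat := size (primes_list m).
Definition pr (m i : nat) : nat := nth 0 (primes_list m) i.
Definition alpha (m i : nat) : nat := 3 * m - pr m i.
Definition kk (m : nat) : nat := (6 * m - 1) * rho m.
Definition mu (m i : nat) : nat := kk m %/ pr m i.
Definition beta (m i : nat) : nat := kk m - pr m i * mu m i.

(* weight attached to j = ell * p_i, 1 <= ell <= 2 rho *)
Definition weight_of_ell (m ell : nat) : int :=
  let r := rho m in
  if ~~ odd r then
    (if ell <= (3 * r) %/ 2 then (Posz 2) else (- 2)%R)
  else
    (if ell <= (3 * r).-1 %/ 2 then (Posz 2)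
     else if ell <= (2 * r - 2) then (- 2)%R else (- 1)%R).

(* abar j: if j = ell * p_i for some i < rho and 1 <= ell <= 2 rho
   (such i, ell are unique), the weight above, otherwise 0 *)
Definition abar (m j : nat) : int :=
  let P := fun p => (p %| j) && (0 < j %/ p <= 2 * rho m) in
  let i := find P (primes_list m) in
  if i < rho m then weight_of_ell m (j %/ pr m i) else 0%R.

Definition theta_bar (m : nat) : int := Posz (2 * rho m).

Definition x_init (m i t : nat) : bool :=
  [&& beta m i <= t, pr m i %| (t - beta m i) & (t - beta m i) %/ pr m i < mu m i].

Definition x (m i : nat) : nat -> bool :=
  lts (kk m) (abar m) (theta_bar m) (x_init m i).

Definition hh (m : nat) : nat := rho m * kk m.

Definition bw (m f : nat) : int :=
  if (rho m %| f) && (0 < f) then abar m (f %/ rho m) else 0%R.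

(* y : n = rho j + i with i < rho, so j = n / rho, i = n mod rho *)
Definition y_init (m n : nat) : bool := x m (n %% rho m) (n %/ rho m).+1.

Definition y (m : nat) : nat -> bool :=
  lts (hh m) (bw m) (theta_bar m) (y_init m).

Definition L1 (m d : nat) : nat := rho m * \big[lcmn/1]_(i < d.+1) pr m i.
Definition L0 (m d : nat) : nat :=
  if d < (rho m).-1 then rho m * \big[lcmn/1]_(d.+1 <= i < rho m) pr m i
  else 1.

Definition w_init (m d n : nat) : bool :=
  let i := n %% rho m in
  let j := n %/ rho m in
  if i <= d then
    (if j <= kk m - 2 then x m i j.+1 else ~~ x m i (kk m))
  else y m (n + L1 m d).

Definition w (m d : nat) : nat -> bool :=
  lts (hh m) (bw m) (theta_bar m) (w_init m d).

From mathcomp Require Import all_boot all_order all_algebra zify.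
Set Implicit Arguments. Unset Strict Implicit. Unset Printing Implicit Defensive.
Import Order.TTheory GRing.Theory Num.Theory.

(* The proof computes every sequence of the construction in closed form.
   1. Threshold recurrences are determined by their initial values, and the
      rows j |-> s(rho j + i) of a solution of the order-(rho k) recurrence with
      dilated weights bw solve the order-k recurrence with weights abar.
   2. For a prime p_i, a "comb" (the indicator of a residue class mod p_i,
      possibly cut off near k) solves the order-k recurrence: the weights are
      supported on multiples l p_j (l <= 2 rho), the own block of p_i sums to
      the threshold 2 rho at times on the residue class (and not cut off) since
      the whole weight profile sums to 2 rho while its nonempty prefixes sum to
      >= 2; off the class, each other prime contributes at most one weight <= 2.
   3. Hence x^{alpha_i}, the rows of y and the rows of w are combs; the rows
      i <= d of w are cut-off combs whose last one sits at rho (k-p_d-1)+d, the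
      rows i > d are infinite combs of period p_i.
   4. So w is periodic with period L0(d) from that position on; the final one
      shows no earlier transient works, and a period must be a multiple of rho
      (rows <= d vanish while rows > d do not) whose row shift every p_i, i > d,
      divides. *)

Definition threshold_rec (h : nat) (b : nat -> int) (theta : int) (s : nat -> bool) : Prop :=
  forall n, h <= n ->
  s n = (theta <= \sum_(1 <= f < h.+1) b f * Posz (s (n - f)%N : nat))%R.

Lemma size_lts_hist h b theta init n : size (lts_hist h b theta init n) = n.
Proof. by elim: n => //= n IH; rewrite size_rcons IH. Qed.

Lemma nth_lts_hist h b theta init n t : t < n ->
  nth false (lts_hist h b theta init n) t = lts h b theta init t.
Proof.
elim: n => // n IH; rewrite ltnS leq_eqVlt => /orP [/eqP -> // | lt_tn].
by rewrite /= nth_rcons size_lts_hist lt_tn IH.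
Qed.

Lemma lts_unfold h b theta init n :
  lts h b theta init n = lts_next h b theta init n (lts_hist h b theta init n).
Proof. by rewrite /lts /= nth_rcons size_lts_hist ltnn eqxx. Qed.

Lemma lts_init h b theta init n : n < h -> lts h b theta init n = init n.
Proof. by move=> lt_nh; rewrite lts_unfold /lts_next lt_nh. Qed.

Lemma lts_threshold_rec h b theta init : threshold_rec h b theta (lts h b theta init).
Proof.
move=> n le_hn; rewrite lts_unfold /lts_next ltnNge le_hn /=.
congr (_ <= _)%R; apply: eq_big_nat => f /andP [f_gt0 f_le].
by rewrite nth_lts_hist //; lia.
Qed.

Lemma threshold_rec_unique h b theta s1 s2 :
  threshold_rec h b theta s1 -> threshold_rec h b theta s2 ->
  (forall n, n < h -> s1 n = s2 n) -> s1 =1 s2.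
Proof.
move=> rec1 rec2 init; elim/ltn_ind=> n IH.
have [lt_nh | le_hn] := ltnP n h; first exact: init.
rewrite rec1 // rec2 //; congr (_ <= _)%R; apply: eq_big_nat => f /andP [f_gt0 f_le].
by rewrite IH //; lia.
Qed.

Definition dilate (r : nat) (b : nat -> int) (f : nat) : int :=
  if (r %| f) && (0 < f) then b (f %/ r) else 0%R.

Lemma sum_multiples (r k : nat) (F : nat -> int) : 0 < r ->
  (forall f, ~~ (r %| f) -> F f = 0%R) ->
  (\sum_(1 <= f < (r * k).+1) F f = \sum_(1 <= j < k.+1) F (r * j)%N)%R.
Proof.
move=> r_gt0 F0; elim: k => [|k IH]; first by rewrite muln0 !big_geq.
rewrite [RHS]big_nat_recr //= -IH (_ : r * k.+1 = r * k + r); last by rewrite mulnS addnC.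
rewrite (big_cat_nat (n := (r * k).+1)) //=; last by rewrite ltnS leq_addr.
congr (_ + _)%R; rewrite [in LHS]big_nat_recr /=; last by lia.
rewrite big1_seq ?add0r; first by [].
move=> f; rewrite mem_index_iota => f_range.
apply: F0; apply/negP => dvd_rf.
have := dvdn_leq _ (dvdn_sub dvd_rf (dvdn_mulr k (dvdnn r))); lia.
Qed.

Lemma threshold_rec_rows r k b theta s i : 0 < r ->
  threshold_rec (r * k) (dilate r b) theta s ->
  threshold_rec k b theta (fun j => s (r * j + i)).
Proof.
move=> r_gt0 rec_s j le_kj.
have le_rk : r * k <= r * j + i by have := leq_mul2l r k j; rewrite le_kj orbT; lia.
rewrite rec_s // (@sum_multiples r k) //; last by move=> f /negbTE nd; rewrite /dilate nd mul0r.
congr (_ <= _)%R; apply: eq_big_nat => f /andP [f_gt0 f_le].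
rewrite /dilate dvdn_mulr // muln_gt0 r_gt0 f_gt0 mulKn //.
have le_rf : r * f <= r * j by rewrite leq_mul2l; lia.
by rewrite -addnBAC // -mulnBr.
Qed.

Lemma periodic_from_mul s T P : periodic_from s T P ->
  forall c n, T <= n -> s (n + c * P) = s n.
Proof.
move=> per; elim=> [|c IH] n le_Tn; first by rewrite addn0.
by rewrite mulSn addnCA addnC per ?IH // (leq_trans le_Tn (leq_addr _ _)).
Qed.

Lemma sum_nat_pick (g : nat -> int) a b c :
  (\sum_(a <= f < b) (if f == c then g f else 0) = if (a <= c < b)%N then g c else 0)%R.
Proof. by rewrite -big_mkcond /= big_nat1_eq. Qed.

Lemma sum_indicator_le1 (c : nat -> bool) a b :
  {in index_iota a b &, forall l1 l2, c l1 -> c l2 -> l1 = l2} ->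
  (\sum_(a <= l < b) Posz (c l : nat) <= 1)%R.
Proof.
move=> c_uniq; have [/hasP [l0 l0_in c_l0] | /hasPn none] := boolP (has c (index_iota a b)).
  rewrite (eq_big_seq (fun l => if l == l0 then 1 else 0)%R) ?sum_nat_pick.
    by case: ifP.
  move=> l l_in; case: eqP => [-> | ne]; first by rewrite c_l0.
  by case c_l: (c l) => //; case: ne; apply: c_uniq.
by rewrite big1_seq // => l /none /negbTE ->.
Qed.

Section Primes.

Variable m : nat.

Lemma rho_le_pred : rho m <= m.-1.
Proof.
rewrite /rho /primes_list size_filter; apply: leq_trans (count_size _ _) _.
by rewrite size_rev size_iota.
Qed.

Lemma pr_mem i : i < rho m -> pr m i \in primes_list m.
Proof. exact: mem_nth. Qed.

Lemma pr_prop i : i < rho m -> [/\ prime (pr m i), 2 * m < pr m i & pr m i < 3 * m].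
Proof.
move/pr_mem; rewrite mem_filter mem_rev mem_iota => /andP [p_prime /andP [lo hi]].
by split => //; lia.
Qed.

Lemma pr_gt0 i : i < rho m -> 0 < pr m i.
Proof. by case/pr_prop => /prime_gt0. Qed.

Lemma pr_inj i j : i < rho m -> j < rho m -> pr m i = pr m j -> i = j.
Proof.
move=> lt_i lt_j eq_p; apply/eqP; rewrite -(@nth_uniq _ 0 (primes_list m)) //.
  by rewrite -/(pr m i) -/(pr m j) eq_p.
by rewrite filter_uniq // rev_uniq iota_uniq.
Qed.

Lemma pr_nonincreasing i j : i <= j -> j < rho m -> pr m j <= pr m i.
Proof.
rewrite leq_eqVlt => /orP [/eqP -> // | lt_ij lt_j].
have sorted_pr : sorted (fun a b => b < a) (primes_list m).
  apply: sorted_filter; first by move=> a b c; lia.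
  by rewrite rev_sorted iota_ltn_sorted.
apply/ltnW/(sorted_ltn_nth _ _ sorted_pr) => //; first by move=> a b c; lia.
by rewrite inE; apply: ltn_trans lt_j.
Qed.

(* Every p_i exceeds 2 rho, so it divides no 1 <= l <= 2 rho. *)
Lemma twice_rho_lt_pr i : i < rho m -> 2 * rho m < pr m i.
Proof. by case/pr_prop=> _ lo _; have := rho_le_pred; lia. Qed.

Lemma multiple_pr_range i l : i < rho m -> 1 <= l <= 2 * rho m -> 1 <= l * pr m i <= kk m.
Proof.
move=> lt_i l_range; have [p_prime _ p_lt] := pr_prop lt_i.
have := prime_gt0 p_prime; rewrite /kk; nia.
Qed.

Lemma twice_pr_le_kk i : i < rho m -> 2 * pr m i <= kk m.
Proof.
move=> lt_i; have := @multiple_pr_range i 2 lt_i.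
case: (rho m) lt_i => // r _; lia.
Qed.

End Primes.

Section Weights.

Variable m : nat.
Hypothesis rho_ge2 : 2 <= rho m.

Definition weight_prefix (n : nat) : int := (\sum_(1 <= l < n.+1) weight_of_ell m l)%R.

Definition weight_prefix_closed (n : nat) : int :=
  let r := rho m in
  if ~~ odd r then
    (if n <= (3 * r) %/ 2 then Posz (2 * n) else (Posz (6 * r) - Posz (2 * n))%R)
  else
    (if n <= (3 * r).-1 %/ 2 then Posz (2 * n)
     else if n <= 2 * r - 2 then (Posz (6 * r) - 2 - Posz (2 * n))%R
     else (Posz (4 * r) - Posz n)%R).

Lemma weight_prefix_formula n : n <= 2 * rho m -> weight_prefix n = weight_prefix_closed n.
Proof.
elim: n => [|n IH] le_n; first by rewrite /weight_prefix big_geq //= /weight_prefix_closed; case: ifP.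
rewrite /weight_prefix big_nat_recr //= -/(weight_prefix n) IH; last lia.
rewrite /weight_prefix_closed /weight_of_ell.
move: le_n rho_ge2; have := odd_double_half (rho m).
by case: (odd (rho m)) => /= half le_n r_ge2; rewrite -muln2 in half; repeat case: ifP => ?; lia.
Qed.

Lemma weight_prefix_total : weight_prefix (2 * rho m) = Posz (2 * rho m).
Proof.
rewrite weight_prefix_formula // /weight_prefix_closed.
move: rho_ge2; have := odd_double_half (rho m).
by case: (odd (rho m)) => /= half r_ge2; rewrite -muln2 in half; repeat case: ifP => ?; lia.
Qed.

Lemma weight_prefix_ge2 n : 1 <= n <= 2 * rho m -> (2 <= weight_prefix n)%R.
Proof.
move=> n_range; rewrite weight_prefix_formula; last lia.
rewrite /weight_prefix_closed; move: rho_ge2 n_range; have := odd_double_half (rho m).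
by case: (odd (rho m)) => /= half r_ge2 n_range; rewrite -muln2 in half; repeat case: ifP => ?; lia.
Qed.

Lemma weight_le2 l : (weight_of_ell m l <= 2)%R.
Proof. by rewrite /weight_of_ell; repeat case: ifP. Qed.

(* Weights selected by an upward-closed set of indices avoiding 1 sum to at
   most the total minus 2 (the missing prefix contributes at least 2). *)
Lemma suffix_weight_bound (c : nat -> bool) n :
  c 1 = false -> {homo c : l l' / l <= l' >-> l ==> l'} ->
  1 <= n <= 2 * rho m ->
  (\sum_(1 <= l < n.+1) weight_of_ell m l * Posz (c l : nat) <= weight_prefix n - 2)%R.
Proof.
move=> c1 c_mono; elim: n => [|n IH] n_range; first lia.
have [c_n | c_n] := boolP (c n.+1).
  have n_ge1 : 1 <= n by case: n {IH n_range} c_n => //; rewrite c1.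
  have -> : weight_prefix n.+1 = (weight_prefix n + weight_of_ell m n.+1)%R.
    by rewrite /weight_prefix big_nat_recr.
  rewrite big_nat_recr //= c_n mulr1.
  have shift (S P W : int) : (S <= P - 2)%R -> (S + W <= P + W - 2)%R by lia.
  by apply/shift/IH; lia.
rewrite big1_seq => [|l]; first by have := weight_prefix_ge2 n_range; lia.
rewrite mem_index_iota => l_range; case c_l: (c l); last by rewrite mulr0.
by have := c_mono l n.+1 ltac:(lia); rewrite c_l (negbTE c_n).
Qed.

End Weights.

Section Decomposition.

Variable m : nat.

Lemma abar_pointwise f :
  abar m f = (\sum_(i < rho m) \sum_(1 <= l < (2 * rho m).+1)
                (if f == (l * pr m i)%N then weight_of_ell m l else 0))%R.
Proof.
rewrite /abar /=; set P := fun p => (p %| f) && (0 < f %/ p <= 2 * rho m).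
have other_prime i l : i < rho m -> 1 <= l <= 2 * rho m -> f = l * pr m i -> P (pr m i).
  by move=> lt_i l_range f_eq; rewrite /P f_eq dvdn_mull // mulnK ?pr_gt0 //; lia.
case: ifP => [lt_i0 | /negbT no_i]; last first.
  rewrite big1 // => i _; rewrite big1_seq // => l; rewrite mem_index_iota => l_range.
  case: eqP => // f_eq; case/negP: no_i; rewrite -has_find; apply/hasP.
  by exists (pr m i); [exact: pr_mem | apply: other_prime f_eq => //; lia].
set i0 := find P (primes_list m); set l0 := f %/ pr m i0.
have /andP [dvd_f /andP [l0_gt0 l0_le]] : P (pr m i0) by apply: nth_find; rewrite has_find.
have f_eq : f = l0 * pr m i0 by rewrite divnK.
rewrite (bigD1 (Ordinal lt_i0)) //= (eq_bigr (fun l => if l == l0 then weight_of_ell m l else 0)%R).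
  rewrite sum_nat_pick ifT; last lia.
  rewrite big1 ?addr0 //= => i ne_i; rewrite big1_seq // => l; rewrite mem_index_iota => l_range.
  case: eqP => // f_eq'; have [p_prime _ _] := pr_prop (ltn_ord i).
  have [p0_prime _ _] := pr_prop lt_i0.
  have : pr m i %| l0 * pr m i0 by rewrite -f_eq f_eq' dvdn_mull.
  rewrite Euclid_dvdM // => /orP [/(dvdn_leq l0_gt0) | ].
    by have := twice_rho_lt_pr (ltn_ord i); lia.
  rewrite dvdn_prime2 // => /eqP /(pr_inj (ltn_ord i) lt_i0) eq_i.
  by move: ne_i; rewrite -val_eqE /= eq_i eqxx.
by move=> l _; rewrite {1}f_eq eqn_pmul2r ?pr_gt0 // eq_sym.
Qed.

Lemma abar_sum_decomp (F : nat -> int) :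
  (\sum_(1 <= f < (kk m).+1) abar m f * F f =
   \sum_(i < rho m) \sum_(1 <= l < (2 * rho m).+1) weight_of_ell m l * F (l * pr m i)%N)%R.
Proof.
under eq_bigr => f _ do rewrite abar_pointwise mulr_suml.
under eq_bigr => f _ do under eq_bigr => i _ do rewrite mulr_suml.
rewrite exchange_big /=; apply: eq_bigr => i _.
rewrite exchange_big /=; apply: eq_big_nat => l l_range.
rewrite (eq_bigr (fun f => if f == (l * pr m i)%N then weight_of_ell m l * F f else 0)%R).
  by rewrite sum_nat_pick ifT // ltnS multiple_pr_range.
by move=> f _; case: ifP; rewrite ?mul0r.
Qed.

End Decomposition.

Lemma mod_sub_multiple t l a p : l * p <= t -> (t - l * p + a) %% p = (t + a) %% p.
Proof. by move=> le_lp; rewrite -(modnMDl l) addnA subnKC. Qed.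

Lemma beta_mod m i : beta m i = kk m %% pr m i.
Proof. by rewrite /beta /mu {1}(divn_eq (kk m) (pr m i)) mulnC addKn. Qed.

Lemma beta_lt m i : i < rho m -> beta m i < pr m i.
Proof. by move=> lt_i; rewrite beta_mod ltn_mod pr_gt0. Qed.

Section Combs.

Variable m : nat.
Hypothesis rho_ge2 : 2 <= rho m.

Definition comb (i : nat) (infinite : bool) (a t : nat) : bool :=
  ((t + a) %% pr m i == beta m i) && (infinite || (t + pr m i < kk m)).

Definition comb_block (i : nat) (infinite : bool) (a t j : nat) : int :=
  (\sum_(1 <= l < (2 * rho m).+1)
     weight_of_ell m l * Posz (comb i infinite a (t - l * pr m j)%N : nat))%R.

Lemma cross_residues_distinct i j t a l1 l2 : i < rho m -> j < rho m -> i != j ->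
  l1 <= 2 * rho m -> l2 <= 2 * rho m -> l1 * pr m j <= t -> l2 * pr m j <= t ->
  (t - l1 * pr m j + a) %% pr m i = (t - l2 * pr m j + a) %% pr m i -> l1 = l2.
Proof.
move=> lt_i lt_j ne_ij.
wlog le_l12 : l1 l2 / l1 <= l2 => [sym | le_l1 le_l2 le1 le2 eq_mod].
  by case: (leqP l1 l2) => [/sym // | /ltnW/sym sym' *]; apply/esym/sym'.
apply/eqP; rewrite eqn_leq le_l12 leqNgt; apply/negP => lt_l12.
have le_mul : l1 * pr m j <= l2 * pr m j by rewrite leq_mul2r le_l12 orbT.
move/eqP: eq_mod; rewrite eqn_mod_dvd; last lia.
have -> : t - l1 * pr m j + a - (t - l2 * pr m j + a) = (l2 - l1) * pr m j by rewrite mulnBl; lia.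
have [pi_prime _ _] := pr_prop lt_i; have [pj_prime _ _] := pr_prop lt_j.
rewrite Euclid_dvdM // => /orP [/dvdn_leq | ].
  by have := twice_rho_lt_pr lt_i; lia.
rewrite dvdn_prime2 // => /eqP /(pr_inj lt_i lt_j) eq_ij.
by rewrite eq_ij eqxx in ne_ij.
Qed.

Lemma multiple_le_time j l t : j < rho m -> l <= 2 * rho m -> kk m <= t -> l * pr m j <= t.
Proof.
move=> lt_j le_l le_kt; case: l le_l => [|l] le_l; first by rewrite mul0n.
by have := @multiple_pr_range m j l.+1 lt_j ltac:(lia); lia.
Qed.

Lemma own_block_inactive i inf a t : i < rho m -> kk m <= t ->
  (t + a) %% pr m i != beta m i -> comb_block i inf a t i = 0%R.
Proof.
move=> lt_i le_kt /negbTE off; rewrite /comb_block big1_seq // => l.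
rewrite mem_index_iota => l_range.
by rewrite /comb mod_sub_multiple ?multiple_le_time //; [rewrite off mulr0 | lia].
Qed.

Lemma cross_block_inactive i j inf a t : i < rho m -> j < rho m -> i != j -> kk m <= t ->
  (t + a) %% pr m i == beta m i -> comb_block i inf a t j = 0%R.
Proof.
move=> lt_i lt_j ne_ij le_kt /eqP on; rewrite /comb_block big1_seq // => l.
rewrite mem_index_iota /comb => l_range; case: eqP => [eq_mod | _]; last by rewrite mulr0.
have le_l : l <= 2 * rho m by lia.
have := cross_residues_distinct (a := a) lt_i lt_j ne_ij le_l (leq0n _)
          (multiple_le_time lt_j le_l le_kt) (leq0n t).
by rewrite mul0n subn0 eq_mod on => /(_ erefl); lia.
Qed.

(* Another prime's block hits the comb at most once, so contributes <= 2. *)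
Lemma cross_block_le2 i j inf a t : i < rho m -> j < rho m -> i != j -> kk m <= t ->
  (comb_block i inf a t j <= 2)%R.
Proof.
move=> lt_i lt_j ne_ij le_kt.
apply: (@le_trans _ _ (2 * \sum_(1 <= l < (2 * rho m).+1)
                            Posz (comb i inf a (t - l * pr m j)%N : nat))%R).
  rewrite mulr_sumr; apply: ler_sum => l _.
  by case: (comb _ _ _ _); rewrite ?mulr1 ?mulr0 ?weight_le2.
have at_most_one : (\sum_(1 <= l < (2 * rho m).+1)
                      Posz (comb i inf a (t - l * pr m j)%N : nat) <= 1)%R.
  apply: sum_indicator_le1 => l1 l2; rewrite !mem_index_iota => l1_range l2_range.
  move=> /andP [/eqP on1 _] /andP [/eqP on2 _].
  have le1 : l1 <= 2 * rho m by lia.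
  have le2 : l2 <= 2 * rho m by lia.
  apply: (cross_residues_distinct (a := a) lt_i lt_j ne_ij le1 le2
           (multiple_le_time lt_j le1 le_kt) (multiple_le_time lt_j le2 le_kt)).
  by rewrite on1 on2.
have double (S : int) : (S <= 1)%R -> (2 * S <= 2)%R by lia.
exact: double at_most_one.
Qed.

Lemma own_block_active i inf a t : i < rho m -> kk m <= t ->
  (t + a) %% pr m i == beta m i ->
  if inf then comb_block i inf a t i = Posz (2 * rho m)
  else (comb_block i inf a t i <= Posz (2 * rho m)%N - 2)%R.
Proof.
move=> lt_i le_kt on; rewrite /comb_block.
under eq_big_nat => l l_range.
  rewrite /comb mod_sub_multiple ?multiple_le_time //; last lia.
  rewrite on /=; over.
case: inf => /=.
  by under eq_big_nat => l _ do rewrite mulr1; rewrite -weight_prefix_total.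
rewrite -weight_prefix_total //; apply: suffix_weight_bound => //.
- by have := @multiple_le_time i 1 t lt_i ltac:(lia) le_kt; lia.
- move=> l l' le_ll' /=; apply/implyP.
  have : l * pr m i <= l' * pr m i by rewrite leq_mul2r le_ll' orbT.
  lia.
- lia.
Qed.

Lemma comb_threshold_rec i inf a : i < rho m ->
  threshold_rec (kk m) (abar m) (theta_bar m) (comb i inf a).
Proof.
move=> lt_i t le_kt.
have -> : (\sum_(1 <= f < (kk m).+1) abar m f * Posz (comb i inf a (t - f)%N : nat)
          = \sum_(j < rho m) comb_block i inf a t j)%R by exact: abar_sum_decomp.
rewrite (bigD1 (Ordinal lt_i)) //= /theta_bar.
have ne_i (j : 'I_(rho m)) : j != Ordinal lt_i -> i != j.
  by rewrite eq_sym -val_eqE.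
have [on | off] := boolP ((t + a) %% pr m i == beta m i).
  rewrite big1 => [|j /ne_i ne_ij]; last exact: cross_block_inactive.
  rewrite addr0 /comb on /=; have := own_block_active inf lt_i le_kt on.
  case: inf => /= [-> | own_le]; first by rewrite lexx.
  have -> : (t + pr m i < kk m) = false by lia.
  by apply/esym/negbTE; rewrite -ltNge; apply: le_lt_trans own_le _; lia.
rewrite own_block_inactive // add0r /comb (negbTE off) /=.
apply/esym/negbTE; rewrite -ltNge.
apply: (@le_lt_trans _ _ (\sum_(j < rho m | j != Ordinal lt_i) 2)%R).
  by apply: ler_sum => j /ne_i ne_ij; apply: cross_block_le2.
have split_sum : (\sum_(j < rho m) 2 = 2 + \sum_(j < rho m | j != Ordinal lt_i) 2 :> int)%R.
  by rewrite (bigD1 (Ordinal lt_i)).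
have total : (\sum_(j < rho m) 2 = Posz (2 * rho m)%N :> int)%R.
  by rewrite sumr_const card_ord; elim: (rho m) => // n IH; rewrite mulrS IH mulnS PoszD.
by rewrite -total split_sum ltrDr.
Qed.

End Combs.

Lemma divmod_row r j i : i < r -> (r * j + i) %/ r = j /\ (r * j + i) %% r = i.
Proof.
move=> lt_ir; have r_gt0 : 0 < r by apply: leq_ltn_trans lt_ir.
by rewrite mulnC divnMDl // modnMDl divn_small // modn_small // addn0.
Qed.

Lemma row_shift r n c : 0 < r -> (n + r * c) %% r = n %% r /\ (n + r * c) %/ r = n %/ r + c.
Proof. by move=> r_gt0; rewrite mulnC divnDMl // addnC modnMDl. Qed.

Lemma congr_mod_gap x z p : 0 < p -> x %% p = z %% p -> x < z -> x + p <= z.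
Proof.
move=> p_gt0 eq_mod lt_xz.
have : p %| z - x by rewrite -eqn_mod_dvd ?(ltnW lt_xz) // eq_mod.
by move/dvdn_leq; lia.
Qed.

Section Identification.

Variable m : nat.
Hypothesis rho_ge2 : 2 <= rho m.

Lemma lts_row_threshold_rec init i :
  threshold_rec (kk m) (abar m) (theta_bar m)
    (fun j => lts (hh m) (bw m) (theta_bar m) init (rho m * j + i)).
Proof.
exact: (@threshold_rec_rows (rho m) (kk m) _ _ _ i (ltnW rho_ge2) (@lts_threshold_rec _ _ _ init)).
Qed.

Lemma row_lt_hh i j : i < rho m -> j < kk m -> rho m * j + i < hh m.
Proof. by rewrite /hh; nia. Qed.

Lemma x_init_comb i t : i < rho m -> t < kk m -> x_init m i t = (t %% pr m i == beta m i).
Proof.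
move=> lt_i lt_tk; have p_gt0 := pr_gt0 lt_i; have lt_beta := beta_lt lt_i.
have kk_eq : kk m = mu m i * pr m i + beta m i by rewrite beta_mod /mu -divn_eq.
rewrite /x_init; apply/and3P/eqP => [[le_bt /dvdnP [q t_eq] _] | t_mod].
  by rewrite -(subnK le_bt) t_eq modnMDl modn_small.
have := divn_eq t (pr m i); rewrite t_mod; move: (t %/ pr m i) => q t_eq.
have -> : t - beta m i = q * pr m i by lia.
split; [lia | exact: dvdn_mull | rewrite mulnK // -(ltn_pmul2r p_gt0); lia].
Qed.

Lemma x_comb i : i < rho m -> x m i =1 comb m i true 0.
Proof.
move=> lt_i; apply: (threshold_rec_unique (@lts_threshold_rec _ _ _ _)).
  exact: comb_threshold_rec.
by move=> t lt_tk; rewrite lts_init // x_init_comb // /comb addn0 andbT.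
Qed.

Lemma y_comb i j : i < rho m -> y m (rho m * j + i) = comb m i true 1 j.
Proof.
move=> lt_i; move: j; apply: (threshold_rec_unique (lts_row_threshold_rec _ i)).
  exact: comb_threshold_rec.
move=> j lt_jk /=; rewrite lts_init ?row_lt_hh //.
have [row_j col_i] := divmod_row j lt_i.
by rewrite /y_init row_j col_i x_comb // /comb addn0 addn1.
Qed.

Definition lcm_low (d : nat) : nat := \big[lcmn/1]_(i < d.+1) pr m i.
Definition lcm_high (d : nat) : nat := \big[lcmn/1]_(d.+1 <= i < rho m) pr m i.

Definition w_row (d i j : nat) : bool :=
  if i <= d then comb m i false 1 j else comb m i true (lcm_low d + 1) j.

Lemma w_comb d i j : i < rho m -> w m d (rho m * j + i) = w_row d i j.
Proof.
move=> lt_i; move: j; apply: (threshold_rec_unique (lts_row_threshold_rec _ i)).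
  by rewrite /w_row; case: (i <= d); apply: comb_threshold_rec.
move=> j lt_jk /=; rewrite lts_init ?row_lt_hh //.
have [row_j col_i] := divmod_row j lt_i.
rewrite /w_init row_j col_i /w_row; case: ifP => [le_id | _].
  have kk_mod : kk m %% pr m i = beta m i by rewrite beta_mod.
  have p_gt0 := pr_gt0 lt_i; have le_2p_kk := twice_pr_le_kk lt_i.
  case: ifP => [le_jk | /negbT gt_jk]; rewrite x_comb // /comb addn0 addn1 /=.
    case: eqP => [on | _] //=; apply/esym; rewrite -addSn.
    by apply: (congr_mod_gap p_gt0); [exact: etrans on (esym kk_mod) | lia].
  by rewrite kk_mod eqxx (_ : j + pr m i < kk m = false) ?andbF //; lia.
rewrite /L1 -/(lcm_low d) addnAC -mulnDr y_comb //.
by rewrite /comb addnA.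
Qed.

Lemma w_rows d n : w m d n = w_row d (n %% rho m) (n %/ rho m).
Proof. by rewrite -w_comb ?ltn_mod; [rewrite mulnC -divn_eq | lia]. Qed.

End Identification.

Section Dynamics.

Variable m : nat.
Hypothesis rho_ge2 : 2 <= rho m.
Variable d : nat.
Hypothesis lt_d : d < rho m.

Definition transient : nat := rho m * (kk m - pr m d - 1) + d + 1.

Lemma w_row_low_zero i j : i <= d -> kk m <= j + pr m d -> w_row m d i j = false.
Proof.
move=> le_id le_k; rewrite /w_row le_id /comb /=.
by have := pr_nonincreasing le_id lt_d; rewrite andbC; case: ltnP => //; lia.
Qed.

Lemma w_row_last_one : w_row m d d (kk m - pr m d - 1) = true.
Proof.
have p_gt0 := pr_gt0 lt_d; have le_2p_kk := twice_pr_le_kk lt_d.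
rewrite /w_row leqnn /comb subnK; last lia.
have le_pk : pr m d <= kk m by lia.
have -> : (kk m - pr m d) %% pr m d = beta m d.
  by rewrite beta_mod -{2}(subnK le_pk) modnDr.
by rewrite eqxx /=; lia.
Qed.

Lemma w_row_high_shift i j c : d < i -> pr m i %| c -> w_row m d i (j + c) = w_row m d i j.
Proof.
move=> lt_di /dvdnP [q ->]; rewrite /w_row leqNgt lt_di /comb /= !andbT.
by rewrite addnAC [_ + q * _]addnC modnMDl.
Qed.

Lemma w_row_high_unbounded i J : i < rho m -> d < i -> exists2 j, J <= j & w_row m d i j.
Proof.
move=> lt_i lt_di; set p := pr m i.
have p_gt0 : 0 < p := pr_gt0 lt_i; have lt_beta : beta m i < p := beta_lt lt_i.
have := divn_eq (lcm_low m d + 1) p; have := ltn_pmod (lcm_low m d + 1) p_gt0.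
move: ((lcm_low m d + 1) %/ p) ((lcm_low m d + 1) %% p) => u v lt_v s_eq.
exists (J * p + (beta m i + p - v)); first by have := leq_pmulr J p_gt0; lia.
rewrite /w_row leqNgt lt_di /comb /= andbT s_eq; apply/eqP.
rewrite (_ : _ + _ = beta m i + (J + 1 + u) * p); last by rewrite !mulnDl; lia.
by rewrite addnC modnMDl modn_small.
Qed.

Lemma w_row_high_gap i j q : d < i -> w_row m d i j -> w_row m d i (j + q) -> pr m i %| q.
Proof.
move=> lt_di; rewrite /w_row leqNgt lt_di /comb /= !andbT => /eqP on /eqP on'.
by rewrite /dvdn -(mod0n (pr m i)) -(eqn_modDl (j + (lcm_low m d + 1))) addn0 addnAC on on'.
Qed.

Lemma dvdn_lcm_high i : d < i < rho m -> pr m i %| lcm_high m d.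
Proof.
by move=> i_range; rewrite /lcm_high (big_rem i) ?mem_index_iota //= dvdn_lcml.
Qed.

Lemma lcm_high_dvdn q : (forall i, d < i < rho m -> pr m i %| q) -> lcm_high m d %| q.
Proof.
move=> dvd_q; rewrite /lcm_high big_seq_cond.
apply: (big_ind (fun n => n %| q)) => [|a b|i]; rewrite ?dvd1n ?dvdn_lcm => //.
  by move=> -> ->.
by rewrite mem_index_iota andbT; apply: dvd_q.
Qed.

Lemma lcm_high_gt0 : 0 < lcm_high m d.
Proof.
rewrite /lcm_high big_seq_cond; apply: (big_ind (fun n => 0 < n)) => [//|a b|i].
  by rewrite lcmn_gt0 => -> ->.
by rewrite mem_index_iota andbT => i_range; apply: pr_gt0; lia.
Qed.

Lemma transient_le_row j i : kk m <= j -> transient <= rho m * j + i.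
Proof.
move=> le_kj; have p_gt0 := pr_gt0 lt_d; have le_2p_kk := twice_pr_le_kk lt_d.
rewrite /transient; nia.
Qed.

Lemma w_low_rows_zero n : transient <= n -> n %% rho m <= d -> w m d n = false.
Proof.
move=> le_Tn low; rewrite w_rows //; apply: w_row_low_zero => //.
have := divn_eq n (rho m); move: (n %/ rho m) (n %% rho m) low le_Tn => j i low le_Tn n_eq.
rewrite /transient n_eq in le_Tn.
have : kk m - pr m d - 1 < j; last lia.
by rewrite -(ltn_pmul2l (ltnW rho_ge2)); lia.
Qed.

Lemma w_periodic : periodic_from (w m d) transient (L0 m d).
Proof.
move=> n le_Tn; have r_gt0 : 0 < rho m by lia.
have [low | high] := leqP (n %% rho m) d.
  rewrite (w_low_rows_zero le_Tn low) w_low_rows_zero //.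
    exact: leq_trans le_Tn (leq_addr _ _).
  rewrite /L0; case: ifP => [_ | /negbT ge_d].
    by have [-> _] := row_shift n (lcm_high m d) r_gt0.
  by have := ltn_pmod (n + 1) r_gt0; lia.
have lt_dr : d < (rho m).-1 by have := ltn_pmod n r_gt0; lia.
rewrite /L0 lt_dr -/(lcm_high m d) !w_rows //.
have [-> ->] := row_shift n (lcm_high m d) r_gt0.
by apply: w_row_high_shift => //; apply: dvdn_lcm_high; rewrite high ltn_mod.
Qed.

(* No shorter transient admits a period: the last one of row d would recur. *)
Lemma w_transient_minimal T P : 0 < P -> periodic_from (w m d) T P -> transient <= T.
Proof.
move=> P_gt0 per; rewrite leqNgt; apply/negP; rewrite /transient addn1 ltnS => le_T.
set n := rho m * (kk m - pr m d - 1) + d.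
have one : w m d n = true by rewrite w_comb // w_row_last_one.
have zero : w m d (n + rho m * P) = false.
  by rewrite /n addnAC -mulnDr w_comb // w_row_low_zero //; lia.
by have := periodic_from_mul per (rho m) le_T; rewrite zero one.
Qed.

Lemma w_period_rows q : periodic_from (w m d) transient (rho m * q) -> lcm_high m d %| q.
Proof.
move=> per; apply: lcm_high_dvdn => i /andP [lt_di lt_i].
have [j le_kj one] := w_row_high_unbounded (kk m) lt_i lt_di.
apply: (w_row_high_gap lt_di one).
rewrite -(w_comb rho_ge2 _ _ lt_i) mulnDr addnAC per ?w_comb //.
exact: transient_le_row.
Qed.

(* When some row exceeds d, every period is a multiple of rho: otherwise a
   one of a row > d would be moved onto a vanishing row <= d or conversely. *)
Lemma w_period_multiple_rho P : d < (rho m).-1 -> periodic_from (w m d) transient P ->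
  rho m %| P.
Proof.
move=> lt_dr per; have r_gt0 : 0 < rho m by lia.
have := divn_eq P (rho m); have := ltn_pmod P r_gt0; rewrite /dvdn.
move: (P %/ rho m) (P %% rho m) => q c lt_c P_eq.
have [// | c_gt0] := posnP c; exfalso.
have [le_cd | lt_dc] := leqP c d.
  have [j le_kj one] := w_row_high_unbounded (kk m) (ltac:(lia) : (rho m).-1 < rho m) lt_dr.
  have := per (rho m * j + (rho m).-1) (transient_le_row _ le_kj).
  rewrite (_ : _ + P = rho m * (j + q + 1) + c.-1); last by rewrite P_eq !mulnDr; lia.
  by rewrite !w_comb // ?one ?w_row_low_zero //; lia.
have [j le_kj one] := w_row_high_unbounded (kk m + q) lt_c lt_dc.
have := per (rho m * (j - q) + 0) (transient_le_row 0 (ltac:(lia) : kk m <= j - q)).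
rewrite (_ : _ + P = rho m * j + c); last by rewrite P_eq mulnBr; nia.
by rewrite !w_comb // one w_row_low_zero //; lia.
Qed.

Lemma L0_gt0 : 0 < L0 m d.
Proof. by rewrite /L0; case: ifP => // _; rewrite muln_gt0 lcm_high_gt0 andbT; lia. Qed.

Lemma w_period_minimal P : 0 < P -> periodic_from (w m d) transient P -> L0 m d <= P.
Proof.
move=> P_gt0 per; rewrite /L0; case: ifP => // lt_dr.
have /dvdnP [q P_eq] := w_period_multiple_rho lt_dr per.
rewrite P_eq mulnC in per P_gt0 *; rewrite leq_mul2l -/(lcm_high m d); apply/orP; right.
by apply: dvdn_leq (w_period_rows per); rewrite muln_gt0 in P_gt0; case/andP: P_gt0.
Qed.

End Dynamics.

Unset Implicit Arguments.

Theorem lemma13 (m : nat) (hm : 0 < m) (hrho : 2 <= rho m) (d : nat) (hd : d < rho m) :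
  transient_length (w m d) (rho m * (kk m - pr m d - 1) + d + 1) /\
  cycle_length (w m d) (rho m * (kk m - pr m d - 1) + d + 1) (L0 m d).
Proof.
have periodic := w_periodic hrho hd.
split; split.
- by exists (L0 m d); split; [exact: (L0_gt0 hrho hd) | exact: periodic].
- by move=> T [P [P_gt0 per]]; exact: (w_transient_minimal hrho hd P_gt0 per).
- exact: (L0_gt0 hrho hd).
- by split=> // P P_gt0 per; exact: (w_period_minimal hrho hd P_gt0 per).
Qed.
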